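(* Let $\Gamma,\Delta$ be finite multisets of formulas with $\vdash_{\mathsf{GT}}\Gamma\Rightarrow\Delta$. Then for every pair of partitions $\Gamma=\Gamma_1,\Gamma_2$ and $\Delta=\Lambda_1,\Delta_2$ (as multiset unions) such that $\Lambda_1$ consists of classical formulas, there is a sequent interpolant $\phi$ of the partition sequent $\Gamma_1;\Gamma_2\Rightarrow\Lambda_1;\Delta_2$; moreover, if $\Delta_2$ consists of classical formulas, then $\phi$ can be taken to be classical.
   Context: Fix a countably infinite set $\mathsf{Prop}$ of propositional variables. Classical formulas are generated by $\alpha ::= p \mid \bot \mid \neg\alpha \mid \alpha\wedge\alpha \mid \alpha\vee\alpha$ with $p\in\mathsf{Prop}$. Formulas are generated by $\phi ::= \alpha \mid \phi\wedge\phi \mid \phi\vee\phi \mid \phi\mathbin{\backslash\!\!/}\phi$ where $\alpha$ is classical ($\vee$: split disjunction, $\mathbin{\backslash\!\!/}$: inquisitive disjunction). A sequent is $\Gamma\Rightarrow\Delta$ with $\Gamma,\Delta$ finite multisets of formulas; ''$\Gamma,\Delta$'' is multiset union. Polarity: an occurrence of a propositional variable in $\phi$ is positive (negative) if it lies in the scope of an even (odd) number of negations. $\mathsf{P}^+(\phi)$ ($\mathsf{P}^-(\phi)$) is the set of variables having a positive (negative) occurrence in $\phi$, and $\mathsf{P}^i(\Gamma)=\bigcup_{\phi\in\Gamma}\mathsf{P}^i(\phi)$. A partition sequent $\Gamma_1;\Gamma_2\Rightarrow\Delta_1;\Delta_2$ is an expression such that $\Gamma_1,\Gamma_2\Rightarrow\Delta_1,\Delta_2$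 is a sequent. A formula $\phi$ is a sequent interpolant of it if (i) $\vdash_{\mathsf{GT}^-}\Gamma_1\Rightarrow\Delta_1,\phi$ and $\vdash_{\mathsf{GT}^-}\Gamma_2,\phi\Rightarrow\Delta_2$; and (ii) $\mathsf{P}^i(\phi)\subseteq(\mathsf{P}^i(\Gamma_1)\cup\mathsf{P}^j(\Delta_1))\cap(\mathsf{P}^j(\Gamma_2)\cup\mathsf{P}^i(\Delta_2))$ for $i\in\{+,-\}$ and $j$ the other element of $\{+,-\}$. Deep-inference notation: for a formula $\chi$ with a designated occurrence of a subformula not in the scope of any negation, $\chi\{\eta\}$ denotes the result of replacing that occurrence by $\eta$. The calculus $\mathsf{GT}$ ($\alpha$ ranges over classical formulas, $\Lambda$ over multisets of classical formulas): axioms $\Gamma,p\Rightarrow p,\Delta$ and $\Gamma,\bot\Rightarrow\Delta$; (L$\neg$) from $\Gamma\Rightarrow\alpha,\Delta$ infer $\Gamma,\neg\alpha\Rightarrow\Delta$; (R$\neg$) from $\Gamma,\alpha\Rightarrow\Delta$ infer $\Gamma\Rightarrow\neg\alpha,\Delta$; (L$\wedge$) from $\Gamma,\phi,\psi\Rightarrow\Delta$ infer $\Gamma,\phi\wedge\psi\Rightarrow\Delta$; (R$\wedge$) from $\Gamma\Rightarrow\phi,\Lambda$ and $\Gamma\Rightarrow\psi,\Lambda$ infer $\Gamma\Rightarrow\phi\wedge\psi,\Lambda,\Delta$; (L$\vee$) from $\Gamma,\phi\Rightarrow\Lambda$ and $\Gamma,\psi\Rightarrow\Lambda$ infer $\Gamma,\phi\vee\psi\Rightarrow\Lambda,\Delta$;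 (R$\vee$) from $\Gamma\Rightarrow\phi,\psi,\Delta$ infer $\Gamma\Rightarrow\phi\vee\psi,\Delta$; (L$\mathbin{\backslash\!\!/}$) from $\Gamma,\chi\{\phi_L\}\Rightarrow\Delta$ and $\Gamma,\chi\{\phi_R\}\Rightarrow\Delta$ infer $\Gamma,\chi\{\phi_L\mathbin{\backslash\!\!/}\phi_R\}\Rightarrow\Delta$; (R$\mathbin{\backslash\!\!/}$) from $\Gamma\Rightarrow\chi\{\phi_i\},\Delta$ ($i\in\{L,R\}$) infer $\Gamma\Rightarrow\chi\{\phi_L\mathbin{\backslash\!\!/}\phi_R\},\Delta$; (Cut) from $\Gamma\Rightarrow\phi,\Delta$ and $\Pi,\phi\Rightarrow\Sigma$ infer $\Pi,\Gamma\Rightarrow\Delta,\Sigma$. $\mathsf{GT}^-$ is $\mathsf{GT}$ without (Cut). *)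

(* lists up to Permutation model finite multisets. *)
From Stdlib Require Import List Permutation Bool.
Import ListNotations.

Inductive form : Type :=
| Var  : nat -> form
| Bot  : form
| Neg  : form -> form
| And  : form -> form -> form
| Or   : form -> form -> form            (* split disjunction *)
| Idis : form -> form -> form.           (* inquisitive disjunction *)

Fixpoint classical (f : form) : bool :=
  match f with
  | Var _ | Bot => true
  | Neg a => classical a
  | And a b | Or a b => classical a && classical b
  | Idis _ _ => false
  end.

Fixpoint wf (f : form) : bool :=
  match f with
  | Var _ | Bot => true
  | Neg a => classical a
  | And a b | Or a b | Idis a b => wf a && wf b
  end.

(* contexts chi{ } with a hole not in the scope of any negation *)
Inductive ctx : Type :=
| Hole  : ctx
| CAndL : ctx -> form -> ctx
| CAndR : form -> ctx -> ctx
| COrL  : ctx -> form -> ctx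
| COrR  : form -> ctx -> ctx
| CIdisL : ctx -> form -> ctx
| CIdisR : form -> ctx -> ctx.

Fixpoint plug (c : ctx) (e : form) : form :=
  match c with
  | Hole => e
  | CAndL c' b => And (plug c' e) b
  | CAndR a c' => And a (plug c' e)
  | COrL c' b => Or (plug c' e) b
  | COrR a c' => Or a (plug c' e)
  | CIdisL c' b => Idis (plug c' e) b
  | CIdisR a c' => Idis a (plug c' e)
  end.

Definition all_classical (L : list form) : Prop := Forall (fun f => classical f = true) L.

(* Derivability in GT (cut = true) and GT^- (cut = false).
   Sequents are pairs of lists; the Perm rule makes them multisets. *)
Inductive GT (cut : bool) : list form -> list form -> Prop :=
| GT_perm : forall G G' D D', Permutation G G' -> Permutation D D' ->
    GT cut G D -> GT cut G' D'
| GT_ax : forall G D p, GT cut (Var p :: G) (Var p :: D)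
| GT_bot : forall G D, GT cut (Bot :: G) D
| GT_Lneg : forall G D a, classical a = true ->
    GT cut G (a :: D) -> GT cut (Neg a :: G) D
| GT_Rneg : forall G D a, classical a = true ->
    GT cut (a :: G) D -> GT cut G (Neg a :: D)
| GT_Land : forall G D f g,
    GT cut (f :: g :: G) D -> GT cut (And f g :: G) D
| GT_Rand : forall G L D f g, all_classical L ->
    GT cut G (f :: L) -> GT cut G (g :: L) -> GT cut G (And f g :: L ++ D)
| GT_Lor : forall G L D f g, all_classical L ->
    GT cut (f :: G) L -> GT cut (g :: G) L -> GT cut (Or f g :: G) (L ++ D)
| GT_Ror : forall G D f g,
    GT cut G (f :: g :: D) -> GT cut G (Or f g :: D)
| GT_Lidis : forall G D c fL fR,
    GT cut (plug c fL :: G) D -> GT cut (plug c fR :: G) D ->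
    GT cut (plug c (Idis fL fR) :: G) D
| GT_RidisL : forall G D c fL fR,
    GT cut G (plug c fL :: D) -> GT cut G (plug c (Idis fL fR) :: D)
| GT_RidisR : forall G D c fL fR,
    GT cut G (plug c fR :: D) -> GT cut G (plug c (Idis fL fR) :: D)
| GT_cut : forall G D P S f, cut = true -> wf f = true ->
    GT cut G (f :: D) -> GT cut (f :: P) S -> GT cut (P ++ G) (D ++ S).

(* pvar s f p : variable p has an occurrence in f of polarity s
   (s = true: positive, i.e. under an even number of negations). *)
Fixpoint pvar (s : bool) (f : form) (p : nat) : Prop :=
  match f with
  | Var q => s = true /\ p = q
  | Bot => False
  | Neg a => pvar (negb s) a p
  | And a b | Or a b | Idis a b => pvar s a p \/ pvar s b p
  end.

Definition pvarL (s : bool) (G : list form) (p : nat) : Prop :=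
  exists f, In f G /\ pvar s f p.

Definition interpolant (G1 G2 D1 D2 : list form) (phi : form) : Prop :=
  wf phi = true /\
  GT false G1 (phi :: D1) /\ GT false (phi :: G2) D2 /\
  (forall (s : bool) (p : nat), pvar s phi p ->
     (pvarL s G1 p \/ pvarL (negb s) D1 p) /\
     (pvarL (negb s) G2 p \/ pvarL s D2 p)).

(* A sequent is valid when every choice of resolutions of its antecedent (classical formulas
   obtained by picking one disjunct of each inquisitive disjunction) classically entails the
   disjunction of some choice of resolutions of its succedent.  GT is sound and GT^- is complete
   for this semantics, so it suffices to build interpolants semantically.  For every resolution
   rho of Gamma1, let theta_rho be the strongest classical consequence of /\rho /\ ~\/Lambda1 in
   the signature of the right-hand side, respecting polarities; it is obtained by Shannon
   expansion on each variable, keeping the guard p (resp. ~p) only when p occurs positively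
   (resp. negatively) on both sides.  Validity makes each theta_rho together with any resolution
   of Gamma2 entail a resolution of Delta2.  The interpolant is the inquisitive disjunction of
   the theta_rho, or their classical disjunction when Delta2 is classical. *)

From Stdlib Require Import List Permutation Bool Classical Lia PeanoNat Wf_nat.
Import ListNotations.

(** * Resolution semantics *)

Fixpoint res (f : form) : list form :=
  match f with
  | Var p => [Var p]
  | Bot => [Bot]
  | Neg a => [Neg a]
  | And a b => flat_map (fun x => map (fun y => And x y) (res b)) (res a)
  | Or a b => flat_map (fun x => map (fun y => Or x y) (res b)) (res a)
  | Idis a b => res a ++ res b
  end.

Fixpoint ev (v : nat -> bool) (f : form) : bool :=
  match f with
  | Var p => v p
  | Bot => false
  | Neg a => negb (ev v a)
  | And a b => ev v a && ev v b
  | Or a b | Idis a b => ev v a || ev v b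
  end.

Definition sat (v : nat -> bool) (G : list form) : Prop := forall x, In x G -> ev v x = true.

Definition cl_entails (G D : list form) : Prop :=
  forall v, sat v G -> exists y, In y D /\ ev v y = true.

Notation resolution G RG := (Forall2 (fun f r => In r (res f)) G RG).

Definition valid (G D : list form) : Prop :=
  forall RG, resolution G RG -> exists RD, resolution D RD /\ cl_entails RG RD.

Lemma sat_cons v x G : sat v (x :: G) <-> ev v x = true /\ sat v G.
Proof.
  split.
  - intros H. split; [apply H; left; reflexivity|intros y Hy; apply H; right; exact Hy].
  - intros [Hx HG] y [<-|Hy]; auto.
Qed.

Lemma sat_app v G G' : sat v (G ++ G') <-> sat v G /\ sat v G'.
Proof.
  split.
  - intros H. split; intros x Hx; apply H, in_or_app; auto.
  - intros [H H'] x Hx. apply in_app_or in Hx as [Hx|Hx]; auto.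
Qed.

Lemma cl_entails_mono G D G' D' : cl_entails G D -> incl G G' -> incl D D' -> cl_entails G' D'.
Proof.
  intros H HG HD v Hv. destruct (H v) as (y & Hy & Ey).
  - intros x Hx. apply Hv, HG, Hx.
  - exists y. auto.
Qed.

Lemma in_res_And a b r :
  In r (res (And a b)) <-> exists x y, r = And x y /\ In x (res a) /\ In y (res b).
Proof.
  simpl. rewrite in_flat_map. split.
  - intros (x & Hx & Hy). apply in_map_iff in Hy as (y & <- & Hy). eauto.
  - intros (x & y & -> & Hx & Hy). exists x. split; auto. apply in_map_iff. eauto.
Qed.

Lemma in_res_Or a b r :
  In r (res (Or a b)) <-> exists x y, r = Or x y /\ In x (res a) /\ In y (res b).
Proof.
  simpl. rewrite in_flat_map. split.
  - intros (x & Hx & Hy). apply in_map_iff in Hy as (y & <- & Hy). eauto.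
  - intros (x & y & -> & Hx & Hy). exists x. split; auto. apply in_map_iff. eauto.
Qed.

Lemma res_classical f : classical f = true -> res f = [f].
Proof.
  induction f; simpl; intros H; try discriminate; auto;
    apply andb_true_iff in H as [H1 H2]; rewrite IHf1, IHf2; auto.
Qed.

Lemma in_res_classical {f r} : classical f = true -> In r (res f) -> r = f.
Proof. intros Hf. rewrite res_classical by exact Hf. now intros [<-|[]]. Qed.

Lemma res_nonempty f : exists r, In r (res f).
Proof.
  induction f as [p| |a _|a [x Hx] b [y Hy]|a [x Hx] b [y Hy]|a [x Hx] b _]; simpl; eauto.
  - exists (And x y). apply in_res_And. eauto.
  - exists (Or x y). apply in_res_Or. eauto.
  - exists x. apply in_or_app. auto.
Qed.

Lemma res_wf_classical f r : wf f = true -> In r (res f) -> classical r = true.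
Proof.
  revert r. induction f; intros r Hw Hr; simpl in Hw;
    try (destruct Hr as [<-|[]]; exact Hw || reflexivity);
    apply andb_true_iff in Hw as [W1 W2].
  - apply in_res_And in Hr as (x & y & -> & Hx & Hy). simpl. rewrite (IHf1 x), (IHf2 y); auto.
  - apply in_res_Or in Hr as (x & y & -> & Hx & Hy). simpl. rewrite (IHf1 x), (IHf2 y); auto.
  - apply in_app_or in Hr as [Hr|Hr]; auto.
Qed.

Lemma res_pvar f r s q : In r (res f) -> pvar s r q -> pvar s f q.
Proof.
  revert r s. induction f; intros r s Hr Hp;
    try (destruct Hr as [<-|[]]; exact Hp).
  - apply in_res_And in Hr as (x & y & -> & Hx & Hy). destruct Hp; [left|right]; eauto.
  - apply in_res_Or in Hr as (x & y & -> & Hx & Hy). destruct Hp; [left|right]; eauto.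
  - apply in_app_or in Hr as [Hr|Hr]; [left|right]; eauto.
Qed.

Lemma res_plug_mono c X Y : incl (res X) (res Y) -> incl (res (plug c X)) (res (plug c Y)).
Proof.
  intros H. induction c; simpl plug; intros r Hr; auto.
  - apply in_res_And in Hr as (x & y & -> & Hx & Hy). apply in_res_And. eauto 10.
  - apply in_res_And in Hr as (x & y & -> & Hx & Hy). apply in_res_And. eauto 10.
  - apply in_res_Or in Hr as (x & y & -> & Hx & Hy). apply in_res_Or. eauto 10.
  - apply in_res_Or in Hr as (x & y & -> & Hx & Hy). apply in_res_Or. eauto 10.
  - apply in_app_or in Hr as [Hr|Hr]; apply in_or_app; auto.
  - apply in_app_or in Hr as [Hr|Hr]; apply in_or_app; auto.
Qed.

Lemma res_plug_Idis c a b :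
  incl (res (plug c (Idis a b))) (res (plug c a) ++ res (plug c b)).
Proof.
  induction c; simpl plug; intros r Hr; auto; apply in_or_app.
  - apply in_res_And in Hr as (x & y & -> & Hx & Hy).
    apply IHc, in_app_or in Hx as [Hx|Hx]; [left|right]; apply in_res_And; eauto 10.
  - apply in_res_And in Hr as (x & y & -> & Hx & Hy).
    apply IHc, in_app_or in Hy as [Hy|Hy]; [left|right]; apply in_res_And; eauto 10.
  - apply in_res_Or in Hr as (x & y & -> & Hx & Hy).
    apply IHc, in_app_or in Hx as [Hx|Hx]; [left|right]; apply in_res_Or; eauto 10.
  - apply in_res_Or in Hr as (x & y & -> & Hx & Hy).
    apply IHc, in_app_or in Hy as [Hy|Hy]; [left|right]; apply in_res_Or; eauto 10.
  - simpl. apply in_app_or in Hr as [Hr|Hr].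
    + apply IHc, in_app_or in Hr as [Hr|Hr]; [left|right]; apply in_or_app; auto.
    + left. apply in_or_app. auto.
  - simpl. apply in_app_or in Hr as [Hr|Hr].
    + left. apply in_or_app. auto.
    + apply IHc, in_app_or in Hr as [Hr|Hr]; [left|right]; apply in_or_app; auto.
Qed.

Lemma resolution_cons_inv {f G R} :
  resolution (f :: G) R -> exists r R', R = r :: R' /\ In r (res f) /\ resolution G R'.
Proof. intros H. inversion H. subst. eauto. Qed.

Lemma resolution_exists D : exists RD, resolution D RD.
Proof.
  induction D as [|f D [RD H]]; [exists []; constructor|].
  destruct (res_nonempty f) as [r Hr]. exists (r :: RD). constructor; auto.
Qed.

Lemma resolution_self L : all_classical L -> resolution L L.
Proof. induction 1; constructor; auto. rewrite res_classical by auto. left; auto. Qed.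

Lemma resolution_classical L RL : all_classical L -> resolution L RL -> RL = L.
Proof.
  intros HL H. induction H as [|f r L RL Hr _ IH]; auto.
  inversion HL; subst. f_equal; auto. now apply in_res_classical.
Qed.

Lemma resolution_all_classical D RD :
  Forall (fun f => wf f = true) D -> resolution D RD -> all_classical RD.
Proof.
  intros HD H. induction H as [|f r D RD Hr _ IH]; constructor; inversion HD as [|? ? Hf HD']; subst.
  - eapply res_wf_classical; eauto.
  - exact (IH HD').
Qed.

Lemma resolution_pvar G RG r s q : resolution G RG -> In r RG -> pvar s r q -> pvarL s G q.
Proof.
  intros H. revert r. induction H as [|f r' G RG Hr _ IH]; intros r Hin Hp; [destruct Hin|].
  destruct Hin as [<-|Hin].
  - exists f. split; [left; auto|eapply res_pvar; eauto].
  - destruct (IH r Hin Hp) as (g & Hg & Hpg). exists g. split; [right|]; auto.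
Qed.

(** * Soundness *)

Lemma valid_perm G D G' D' : valid G D -> Permutation G G' -> Permutation D D' -> valid G' D'.
Proof.
  intros HV HG HD RG' HR.
  destruct (Permutation_Forall2 (Permutation_sym HG) HR) as (RG & HRG & HR').
  destruct (HV RG HR') as (RD & HRD & He).
  destruct (Permutation_Forall2 HD HRD) as (RD' & HRD' & HR'').
  exists RD'. split; auto.
  apply (cl_entails_mono _ _ _ _ He); intros x.
  - apply Permutation_in, Permutation_sym, HRG.
  - apply Permutation_in, HRD'.
Qed.

Lemma valid_weaken_r G D E : valid G D -> valid G (D ++ E).
Proof.
  intros HV RG HR. destruct (HV RG HR) as (RD & HRD & He).
  destruct (resolution_exists E) as [RE HRE].
  exists (RD ++ RE). split; [now apply Forall2_app|].
  eapply cl_entails_mono; eauto using incl_refl, incl_appl.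
Qed.

Lemma valid_ax p G : valid (Var p :: G) [Var p].
Proof.
  intros RG HR. destruct (resolution_cons_inv HR) as (r & RG' & -> & [<-|[]] & _).
  exists [Var p]. split; [repeat constructor|].
  intros v Hv. exists (Var p). split; [left; auto|apply Hv; left; auto].
Qed.

Lemma valid_bot G : valid (Bot :: G) [].
Proof.
  intros RG HR. destruct (resolution_cons_inv HR) as (r & RG' & -> & [<-|[]] & _).
  exists []. split; [constructor|]. intros v Hv. discriminate (Hv Bot (or_introl eq_refl)).
Qed.

Lemma valid_Lneg a G D : classical a = true -> valid G (a :: D) -> valid (Neg a :: G) D.
Proof.
  intros Ha HV RG HR. destruct (resolution_cons_inv HR) as (r & RG' & -> & [<-|[]] & HR').
  destruct (HV RG' HR') as (RD & HRD & He).
  destruct (resolution_cons_inv HRD) as (x & RD' & -> & Hx & HRD').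
  apply (in_res_classical Ha) in Hx as ->.
  exists RD'. split; auto. intros v Hv. apply sat_cons in Hv as [Hn Hv].
  destruct (He v Hv) as (y & [<-|Hy] & Ey); eauto.
  simpl in Hn. rewrite Ey in Hn. discriminate.
Qed.

Lemma valid_Rneg a G D : classical a = true -> valid (a :: G) D -> valid G (Neg a :: D).
Proof.
  intros Ha HV RG HR. destruct (HV (a :: RG)) as (RD & HRD & He).
  { constructor; auto. rewrite res_classical by exact Ha. left; auto. }
  exists (Neg a :: RD). split; [constructor; [left|]; auto|].
  intros v Hv. destruct (ev v a) eqn:Ea.
  - destruct (He v) as (y & Hy & Ey); [now apply sat_cons|]. exists y. split; [right|]; auto.
  - exists (Neg a). split; [left|simpl; rewrite Ea]; auto.
Qed.

Lemma valid_Land f g G D : valid (f :: g :: G) D -> valid (And f g :: G) D.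
Proof.
  intros HV RG HR. destruct (resolution_cons_inv HR) as (r & RG' & -> & Hr & HR').
  apply in_res_And in Hr as (x & y & -> & Hx & Hy).
  destruct (HV (x :: y :: RG')) as (RD & HRD & He); [repeat constructor; auto|].
  exists RD. split; auto. intros v Hv. apply He.
  apply sat_cons in Hv as [Hxy Hv]. apply andb_true_iff in Hxy as [Ex Ey].
  apply sat_cons. split; [exact Ex|]. apply sat_cons. split; assumption.
Qed.

Lemma valid_Rand f g G L :
  all_classical L -> valid G (f :: L) -> valid G (g :: L) -> valid G (And f g :: L).
Proof.
  intros HL HV1 HV2 RG HR.
  destruct (HV1 RG HR) as (RD1 & HRD1 & He1). destruct (HV2 RG HR) as (RD2 & HRD2 & He2).
  destruct (resolution_cons_inv HRD1) as (x & L1 & -> & Hx & HL1).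
  destruct (resolution_cons_inv HRD2) as (y & L2 & -> & Hy & HL2).
  apply resolution_classical in HL1, HL2; auto. subst L1 L2.
  exists (And x y :: L). split; [constructor; [apply in_res_And; eauto|apply resolution_self; auto]|].
  intros v Hv.
  destruct (He1 v Hv) as (y1 & [<-|H1] & E1); [|exists y1; split; [right|]; auto].
  destruct (He2 v Hv) as (y2 & [<-|H2] & E2); [|exists y2; split; [right|]; auto].
  exists (And x y). split; [left; auto|simpl; rewrite E1, E2; auto].
Qed.

Lemma valid_Lor f g G L :
  all_classical L -> valid (f :: G) L -> valid (g :: G) L -> valid (Or f g :: G) L.
Proof.
  intros HL HV1 HV2 RG HR. destruct (resolution_cons_inv HR) as (r & RG' & -> & Hr & HR').
  apply in_res_Or in Hr as (x & y & -> & Hx & Hy).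
  destruct (HV1 (x :: RG')) as (RD1 & HRD1 & He1); [constructor; auto|].
  destruct (HV2 (y :: RG')) as (RD2 & HRD2 & He2); [constructor; auto|].
  apply resolution_classical in HRD1, HRD2; auto. subst RD1 RD2.
  exists L. split; [apply resolution_self; auto|].
  intros v Hv. apply sat_cons in Hv as [Exy Hv]. apply orb_true_iff in Exy as [E|E].
  - apply He1, sat_cons; auto.
  - apply He2, sat_cons; auto.
Qed.

Lemma valid_Ror f g G D : valid G (f :: g :: D) -> valid G (Or f g :: D).
Proof.
  intros HV RG HR. destruct (HV RG HR) as (RD & HRD & He).
  destruct (resolution_cons_inv HRD) as (x & RD1 & -> & Hx & HRD1).
  destruct (resolution_cons_inv HRD1) as (y & RD' & -> & Hy & HRD').
  exists (Or x y :: RD'). split; [constructor; [apply in_res_Or; eauto|auto]|].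
  intros v Hv. destruct (He v Hv) as (z & [<-|[<-|Hz]] & Ez).
  - exists (Or x y). split; [left|simpl; rewrite Ez]; auto.
  - exists (Or x y). split; [left|simpl; rewrite Ez, orb_true_r]; auto.
  - exists z. split; [right|]; auto.
Qed.

Lemma valid_left_incl X Y G D : incl (res X) (res Y) -> valid (Y :: G) D -> valid (X :: G) D.
Proof.
  intros Hi HV RG HR. destruct (resolution_cons_inv HR) as (r & RG' & -> & Hr & HR').
  apply HV. constructor; auto.
Qed.

Lemma valid_right_incl X Y G D : incl (res X) (res Y) -> valid G (X :: D) -> valid G (Y :: D).
Proof.
  intros Hi HV RG HR. destruct (HV RG HR) as (RD & HRD & He).
  destruct (resolution_cons_inv HRD) as (r & RD' & -> & Hr & HRD').
  exists (r :: RD'). split; [constructor|]; auto.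
Qed.

Lemma valid_Lidis c a b G D :
  valid (plug c a :: G) D -> valid (plug c b :: G) D -> valid (plug c (Idis a b) :: G) D.
Proof.
  intros HV1 HV2 RG HR. destruct (resolution_cons_inv HR) as (r & RG' & -> & Hr & HR').
  apply res_plug_Idis, in_app_or in Hr as [Hr|Hr]; [apply HV1|apply HV2]; constructor; auto.
Qed.

Lemma valid_cut f G D P S : valid G (f :: D) -> valid (f :: P) S -> valid (P ++ G) (D ++ S).
Proof.
  intros HV1 HV2 RG HR. apply Forall2_app_inv_l in HR as (RP & RG' & HRP & HRG & ->).
  destruct (HV1 RG' HRG) as (RD & HRD & He1).
  destruct (resolution_cons_inv HRD) as (r & RD' & -> & Hr & HRD').
  destruct (HV2 (r :: RP)) as (RS & HRS & He2); [constructor; auto|].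
  exists (RD' ++ RS). split; [now apply Forall2_app|].
  intros v Hv. apply sat_app in Hv as [HvP HvG].
  destruct (He1 v HvG) as (y & [<-|Hy] & Ey).
  - destruct (He2 v) as (z & Hz & Ez); [now apply sat_cons|]. exists z. split; [apply in_or_app|]; auto.
  - exists y. split; [apply in_or_app|]; auto.
Qed.

Lemma incl_res_Idis_l a b : incl (res a) (res (Idis a b)).
Proof. apply incl_appl, incl_refl. Qed.

Lemma incl_res_Idis_r a b : incl (res b) (res (Idis a b)).
Proof. apply incl_appr, incl_refl. Qed.

Theorem GT_sound cut G D : GT cut G D -> valid G D.
Proof.
  induction 1.
  - eapply valid_perm; eauto.
  - apply (valid_weaken_r _ [Var p]), valid_ax.
  - apply (valid_weaken_r _ []), valid_bot.
  - now apply valid_Lneg.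
  - now apply valid_Rneg.
  - now apply valid_Land.
  - apply (valid_weaken_r _ (And f g :: L)). now apply valid_Rand.
  - now apply valid_weaken_r, valid_Lor.
  - now apply valid_Ror.
  - now apply valid_Lidis.
  - eapply valid_right_incl; eauto using res_plug_mono, incl_res_Idis_l.
  - eapply valid_right_incl; eauto using res_plug_mono, incl_res_Idis_r.
  - eapply valid_cut; eauto.
Qed.

(** * Completeness of the cut-free calculus *)

Fixpoint size (f : form) : nat :=
  match f with
  | Var _ | Bot => 1
  | Neg a => S (size a)
  | And a b | Or a b | Idis a b => S (size a + size b)
  end.

Definition sizeL (G : list form) : nat := list_sum (map size G).

Lemma sizeL_cons f G : sizeL (f :: G) = size f + sizeL G.
Proof. reflexivity. Qed.

Lemma sizeL_perm {G G'} : Permutation G G' -> sizeL G = sizeL G'.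
Proof. intros H. apply Permutation_list_sum, Permutation_map, H. Qed.

Definition atomic (f : form) : bool := match f with Var _ | Bot => true | _ => false end.

Lemma Forall_or_perm_cons {A} (P : A -> bool) (L : list A) :
  Forall (fun x => P x = true) L \/ exists x L', P x = false /\ Permutation L (x :: L').
Proof.
  induction L as [|a L [IH|(x & L' & Hx & HP)]].
  - left. constructor.
  - destruct (P a) eqn:Ea; [left; constructor; auto|right; exists a, L; auto].
  - right. exists x, (a :: L'). split; auto.
    transitivity (a :: x :: L'); [now apply perm_skip|apply perm_swap].
Qed.

Lemma form_eq_dec (f g : form) : {f = g} + {f <> g}.
Proof. decide equality; apply Nat.eq_dec. Defined.

Lemma GT_atomic G D :
  Forall (fun f => atomic f = true) G -> Forall (fun f => atomic f = true) D ->
  cl_entails G D -> GT false G D.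
Proof.
  intros AG AD He.
  destruct (in_dec form_eq_dec Bot G) as [HB|HB].
  { apply in_split in HB as (G1 & G2 & ->).
    eapply GT_perm; [apply Permutation_middle|reflexivity|apply GT_bot]. }
  set (v p := if in_dec form_eq_dec (Var p) G then true else false).
  destruct (He v) as (y & Hy & Ey).
  { intros x Hx. rewrite Forall_forall in AG. specialize (AG x Hx).
    destruct x as [p| | | | |]; try discriminate; [|contradiction].
    simpl. unfold v. destruct (in_dec form_eq_dec (Var p) G); tauto. }
  rewrite Forall_forall in AD. specialize (AD y Hy).
  destruct y as [p| | | | |]; try discriminate.
  simpl in Ey. unfold v in Ey. destruct (in_dec form_eq_dec (Var p) G) as [Hp|]; [|discriminate].
  apply in_split in Hp as (G1 & G2 & ->). apply in_split in Hy as (D1 & D2 & ->).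
  eapply GT_perm; [apply Permutation_middle|apply Permutation_middle|apply GT_ax].
Qed.

Lemma cl_entails_Lneg a G D : cl_entails (Neg a :: G) D -> cl_entails G (a :: D).
Proof.
  intros He v Hv. destruct (ev v a) eqn:Ea; [exists a; split; [left|]; auto|].
  destruct (He v) as (y & Hy & Ey); [apply sat_cons; simpl; rewrite Ea; auto|].
  exists y. split; [right|]; auto.
Qed.

Lemma cl_entails_Rneg a G D : cl_entails G (Neg a :: D) -> cl_entails (a :: G) D.
Proof.
  intros He v Hv. apply sat_cons in Hv as [Ea Hv].
  destruct (He v Hv) as (y & [<-|Hy] & Ey); eauto.
  simpl in Ey. rewrite Ea in Ey. discriminate.
Qed.

Lemma cl_entails_Land a b G D : cl_entails (And a b :: G) D -> cl_entails (a :: b :: G) D.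
Proof.
  intros He v Hv. apply sat_cons in Hv as [Ea Hv]. apply sat_cons in Hv as [Eb Hv].
  apply He, sat_cons. simpl. rewrite Ea, Eb. auto.
Qed.

Lemma cl_entails_Ror a b G D : cl_entails G (Or a b :: D) -> cl_entails G (a :: b :: D).
Proof.
  intros He v Hv. destruct (He v Hv) as (y & [<-|Hy] & Ey); [|exists y; simpl; auto].
  apply orb_true_iff in Ey as [E|E]; [exists a|exists b]; simpl; auto.
Qed.

Lemma cl_entails_Lor a b G D :
  cl_entails (Or a b :: G) D -> cl_entails (a :: G) D /\ cl_entails (b :: G) D.
Proof.
  intros He. split; intros v Hv; apply sat_cons in Hv as [E Hv];
    apply He, sat_cons; simpl; rewrite E, ?orb_true_r; auto.
Qed.

Lemma cl_entails_Rand a b G D :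
  cl_entails G (And a b :: D) -> cl_entails G (a :: D) /\ cl_entails G (b :: D).
Proof.
  intros He. split; intros v Hv; destruct (He v Hv) as (y & [<-|Hy] & Ey);
    try (exists y; simpl; auto; fail); apply andb_true_iff in Ey as [Ea Eb].
  - exists a. simpl. auto.
  - exists b. simpl. auto.
Qed.

Definition cl_complete_below (n : nat) : Prop :=
  forall G D, sizeL G + sizeL D < n -> all_classical G -> all_classical D ->
  cl_entails G D -> GT false G D.

Lemma GT_cl_left n f G D :
  cl_complete_below n -> size f + sizeL G + sizeL D <= n -> atomic f = false ->
  classical f = true -> all_classical G -> all_classical D ->
  cl_entails (f :: G) D -> GT false (f :: G) D.
Proof.
  intros IH Hs Hat Hf HG HD He.
  destruct f as [| |a|a b|a b|a b]; simpl in Hat, Hf, Hs; try discriminate.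
  - apply GT_Lneg; auto. apply IH; [rewrite ?sizeL_cons; lia|auto|constructor; auto|].
    now apply cl_entails_Lneg.
  - apply andb_true_iff in Hf as [Ha Hb]. apply GT_Land.
    apply IH; [rewrite ?sizeL_cons; lia|repeat constructor; auto|auto|]. now apply cl_entails_Land.
  - apply andb_true_iff in Hf as [Ha Hb]. apply cl_entails_Lor in He as [He1 He2].
    rewrite <- (app_nil_r D). apply GT_Lor; auto;
      (apply IH; [rewrite sizeL_cons; lia|constructor; auto|auto|auto]).
Qed.

Lemma GT_cl_right n f G D :
  cl_complete_below n -> sizeL G + (size f + sizeL D) <= n -> atomic f = false ->
  classical f = true -> all_classical G -> all_classical D ->
  cl_entails G (f :: D) -> GT false G (f :: D).
Proof.
  intros IH Hs Hat Hf HG HD He.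
  destruct f as [| |a|a b|a b|a b]; simpl in Hat, Hf, Hs; try discriminate.
  - apply GT_Rneg; auto. apply IH; [rewrite ?sizeL_cons; lia|constructor; auto|auto|].
    now apply cl_entails_Rneg.
  - apply andb_true_iff in Hf as [Ha Hb]. apply cl_entails_Rand in He as [He1 He2].
    rewrite <- (app_nil_r D). apply GT_Rand; auto;
      (apply IH; [rewrite sizeL_cons; lia|auto|constructor; auto|auto]).
  - apply andb_true_iff in Hf as [Ha Hb]. apply GT_Ror.
    apply IH; [rewrite ?sizeL_cons; lia|auto|repeat constructor; auto|]. now apply cl_entails_Ror.
Qed.

Lemma cl_entails_perm G D G' D' :
  cl_entails G D -> Permutation G G' -> Permutation D D' -> cl_entails G' D'.
Proof.
  intros He HG HD. apply (cl_entails_mono _ _ _ _ He); intros x; now apply Permutation_in.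
Qed.

Theorem GT_cl_complete G D :
  all_classical G -> all_classical D -> cl_entails G D -> GT false G D.
Proof.
  revert G D.
  enough (H : forall n, cl_complete_below n) by (intros G D; apply (H (S (sizeL G + sizeL D))); lia).
  induction n as [|n IH]; intros G D Hs HG HD He; [lia|].
  destruct (Forall_or_perm_cons atomic G) as [AG|(f & G' & Hf & HP)].
  - destruct (Forall_or_perm_cons atomic D) as [AD|(f & D' & Hf & HP)].
    + now apply GT_atomic.
    + rewrite (sizeL_perm HP) in Hs. apply (Permutation_Forall HP) in HD. inversion HD; subst.
      eapply GT_perm; [reflexivity|symmetry; exact HP|].
      apply (GT_cl_right n); auto; [rewrite sizeL_cons in Hs; lia|]. eapply cl_entails_perm; eauto.
  - rewrite (sizeL_perm HP) in Hs. apply (Permutation_Forall HP) in HG. inversion HG; subst.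
    eapply GT_perm; [symmetry; exact HP|reflexivity|].
    apply (GT_cl_left n); auto; [rewrite sizeL_cons in Hs; lia|]. eapply cl_entails_perm; eauto.
Qed.

Fixpoint ctx_comp (c d : ctx) : ctx :=
  match c with
  | Hole => d
  | CAndL c' b => CAndL (ctx_comp c' d) b
  | CAndR a c' => CAndR a (ctx_comp c' d)
  | COrL c' b => COrL (ctx_comp c' d) b
  | COrR a c' => COrR a (ctx_comp c' d)
  | CIdisL c' b => CIdisL (ctx_comp c' d) b
  | CIdisR a c' => CIdisR a (ctx_comp c' d)
  end.

Lemma plug_ctx_comp c d e : plug (ctx_comp c d) e = plug c (plug d e).
Proof. induction c; simpl; congruence. Qed.

Lemma GT_res_right f c r G D :
  In r (res f) -> GT false G (plug c r :: D) -> GT false G (plug c f :: D).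
Proof.
  revert c r. induction f as [p| |a|a IHa b IHb|a IHa b IHb|a IHa b IHb]; intros c r Hr H.
  1-3: now destruct Hr as [<-|[]].
  - apply in_res_And in Hr as (x & y & -> & Hx & Hy).
    specialize (IHa (ctx_comp c (CAndL Hole y)) x Hx).
    specialize (IHb (ctx_comp c (CAndR a Hole)) y Hy).
    rewrite !plug_ctx_comp in IHa, IHb. auto.
  - apply in_res_Or in Hr as (x & y & -> & Hx & Hy).
    specialize (IHa (ctx_comp c (COrL Hole y)) x Hx).
    specialize (IHb (ctx_comp c (COrR a Hole)) y Hy).
    rewrite !plug_ctx_comp in IHa, IHb. auto.
  - apply in_app_or in Hr as [Hr|Hr].
    + apply GT_RidisL. eauto.
    + apply GT_RidisR. eauto.
Qed.

Lemma GT_resolution_right G D RD E :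
  resolution D RD -> GT false G (RD ++ E) -> GT false G (D ++ E).
Proof.
  intros HR. revert E. induction HR as [|f r D RD Hr _ IH]; intros E H; auto.
  simpl in *. apply (GT_res_right f Hole r); auto.
  eapply GT_perm; [reflexivity|symmetry; apply Permutation_middle|].
  apply IH. eapply GT_perm; [reflexivity|apply Permutation_middle|exact H].
Qed.

Lemma GT_complete_classical_left G D :
  all_classical G -> Forall (fun f => wf f = true) D -> valid G D -> GT false G D.
Proof.
  intros HG HD HV. destruct (HV G (resolution_self _ HG)) as (RD & HRD & He).
  rewrite <- (app_nil_r D). apply (GT_resolution_right _ _ _ _ HRD). rewrite app_nil_r.
  apply GT_cl_complete; eauto using resolution_all_classical.
Qed.

Lemma nonclassical_plug_Idis f :
  wf f = true -> classical f = false -> exists c a b, f = plug c (Idis a b).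
Proof.
  induction f as [p| |a|a IHa b IHb|a IHa b IHb|a _ b _]; simpl; intros Hw Hc;
    try discriminate; [congruence| | |exists Hole, a, b; reflexivity];
    apply andb_true_iff in Hw as [Wa Wb]; destruct (classical a) eqn:Ea.
  - destruct (IHb Wb Hc) as (c & x & y & ->). exists (CAndR a c), x, y. reflexivity.
  - destruct (IHa Wa eq_refl) as (c & x & y & ->). exists (CAndL c b), x, y. reflexivity.
  - destruct (IHb Wb Hc) as (c & x & y & ->). exists (COrR a c), x, y. reflexivity.
  - destruct (IHa Wa eq_refl) as (c & x & y & ->). exists (COrL c b), x, y. reflexivity.
Qed.

Lemma wf_plug_inv c Y : wf (plug c Y) = true -> wf Y = true.
Proof. induction c; simpl; intros H; auto; apply andb_true_iff in H as [H1 H2]; auto. Qed.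

Lemma wf_plug c X Y : wf (plug c Y) = true -> wf X = true -> wf (plug c X) = true.
Proof.
  induction c; simpl; intros H1 H2; auto; apply andb_true_iff in H1 as [H H'];
    apply andb_true_iff; auto.
Qed.

Lemma size_plug c X Y : size X < size Y -> size (plug c X) < size (plug c Y).
Proof. induction c; simpl; lia. Qed.

Theorem GT_complete G D :
  Forall (fun f => wf f = true) G -> Forall (fun f => wf f = true) D -> valid G D -> GT false G D.
Proof.
  remember (sizeL G) as n eqn:Hn. revert G Hn.
  induction n as [n IH] using lt_wf_ind. intros G -> HG HD HV.
  destruct (Forall_or_perm_cons classical G) as [CG|(f & G' & Hf & HP)].
  { now apply GT_complete_classical_left. }
  apply (Permutation_Forall HP) in HG. inversion HG as [|? ? Wf WG']; subst.
  destruct (nonclassical_plug_Idis f Wf Hf) as (c & a & b & ->).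
  pose proof (wf_plug_inv _ _ Wf) as Wab. simpl in Wab. apply andb_true_iff in Wab as [Wa Wb].
  assert (HV' : valid (plug c (Idis a b) :: G') D) by (eapply valid_perm; eauto).
  eapply GT_perm; [symmetry; exact HP|reflexivity|]. apply GT_Lidis.
  - apply IH with (sizeL (plug c a :: G')); auto.
    + rewrite (sizeL_perm HP), !sizeL_cons.
      assert (size (plug c a) < size (plug c (Idis a b))) by (apply size_plug; simpl; lia). lia.
    + constructor; eauto using wf_plug.
    + eapply valid_left_incl; eauto. apply res_plug_mono, incl_res_Idis_l.
  - apply IH with (sizeL (plug c b :: G')); auto.
    + rewrite (sizeL_perm HP), !sizeL_cons.
      assert (size (plug c b) < size (plug c (Idis a b))) by (apply size_plug; simpl; lia). lia.
    + constructor; eauto using wf_plug.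
    + eapply valid_left_incl; eauto. apply res_plug_mono, incl_res_Idis_r.
Qed.

(** * Uniform interpolation for classical formulas *)

Definition Top : form := Neg Bot.

Definition lit (b : bool) (p : nat) : form := if b then Var p else Neg (Var p).

Definition form_of_bool (b : bool) : form := if b then Top else Bot.

Fixpoint subst (p : nat) (c : form) (f : form) : form :=
  match f with
  | Var q => if Nat.eqb q p then c else Var q
  | Bot => Bot
  | Neg a => Neg (subst p c a)
  | And a b => And (subst p c a) (subst p c b)
  | Or a b => Or (subst p c a) (subst p c b)
  | Idis a b => Idis (subst p c a) (subst p c b)
  end.

Definition upd (v : nat -> bool) (p : nat) (b : bool) : nat -> bool :=
  fun q => if Nat.eqb q p then b else v q.

Definition ent (X Y : form) : Prop := forall v, ev v X = true -> ev v Y = true.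

Definition over (P : bool -> nat -> Prop) (f : form) : Prop := forall s q, pvar s f q -> P s q.

Lemma ev_lit v b p : ev v (lit b p) = true <-> v p = b.
Proof. destruct b; simpl; destruct (v p); simpl; split; congruence. Qed.

Lemma pvar_lit s b p q : pvar s (lit b p) q -> s = b /\ q = p.
Proof. destruct b, s; simpl; intros [Hs ->]; auto; discriminate. Qed.

Lemma ev_subst_bool p b X v : ev v (subst p (form_of_bool b) X) = ev (upd v p b) X.
Proof.
  induction X as [q| | | | |]; simpl; try congruence.
  unfold upd. destruct (Nat.eqb q p); [now destruct b|reflexivity].
Qed.

Lemma pvar_subst_bool p b X s q : pvar s (subst p (form_of_bool b) X) q -> q <> p /\ pvar s X q.
Proof.
  revert s. induction X as [r| |a IH|a IHa c IHc|a IHa c IHc|a IHa c IHc]; simpl; intros s H;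
    try (destruct H as [H|H]; [apply IHa in H|apply IHc in H]; tauto).
  - destruct (Nat.eqb r p) eqn:E; [destruct b; simpl in H; tauto|].
    destruct H as [Hs ->]. apply Nat.eqb_neq in E. auto.
  - destruct H.
  - now apply IH.
Qed.

Lemma classical_subst p c X :
  classical c = true -> classical X = true -> classical (subst p c X) = true.
Proof.
  intros Hc. induction X as [q| | | | |]; simpl; intros H; auto.
  - now destruct (Nat.eqb q p).
  - apply andb_true_iff in H as [H1 H2]. apply andb_true_iff; auto.
  - apply andb_true_iff in H as [H1 H2]. apply andb_true_iff; auto.
Qed.

Lemma ev_upd_same v p b X : v p = b -> ev (upd v p b) X = ev v X.
Proof.
  intros H. induction X as [q| | | | |]; simpl; try congruence.
  unfold upd. destruct (Nat.eqb q p) eqn:E; auto. apply Nat.eqb_eq in E. congruence.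
Qed.

Lemma ev_mono_at p X : forall s v w,
  ~ pvar (negb s) X p -> (forall q, q <> p -> v q = w q) ->
  (if s then (v p = true -> w p = true) else (w p = true -> v p = true)) ->
  ev v X = true -> ev w X = true.
Proof.
  induction X as [q| |a IH|a IHa b IHb|a IHa b IHb|a IHa b IHb]; simpl; intros s v w Hp Hvw Hs He;
    try discriminate.
  - destruct (Nat.eq_dec q p) as [->|Hq]; [|now rewrite <- Hvw].
    destruct s; simpl in Hp; auto.
  - rewrite negb_involutive in Hp. apply negb_true_iff in He. apply negb_true_iff.
    destruct (ev w a) eqn:Ew; auto. rewrite <- He. symmetry. apply (IH (negb s) w v).
    + now rewrite negb_involutive.
    + intros r Hr. symmetry. auto.
    + now destruct s.
    + exact Ew.
  - apply andb_true_iff in He as [Ha Hb]. apply andb_true_iff.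
    split; [apply (IHa s v w)|apply (IHb s v w)]; tauto.
  - apply orb_true_iff in He as [Ha|Hb]; apply orb_true_iff;
      [left; apply (IHa s v w)|right; apply (IHb s v w)]; tauto.
  - apply orb_true_iff in He as [Ha|Hb]; apply orb_true_iff;
      [left; apply (IHa s v w)|right; apply (IHb s v w)]; tauto.
Qed.

Lemma ev_upd_free Y p b v : ~ pvar b Y p -> ev (upd v p b) Y = true -> ev v Y = true.
Proof.
  intros Hp. apply (ev_mono_at p Y (negb b)); [now rewrite negb_involutive| |].
  - intros q Hq. unfold upd. apply Nat.eqb_neq in Hq. now rewrite Hq.
  - unfold upd. rewrite Nat.eqb_refl. destruct b; simpl; auto; discriminate.
Qed.

Section UniformInterpolation.

Variable Rt : bool -> nat -> Prop.

Definition uniform_interpolant (X Y : form) : Prop :=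
  ent X Y /\ forall B, over Rt B -> ent X B -> ent Y B.

Lemma uniform_interpolant_refl X : uniform_interpolant X X.
Proof. split; [intros v; auto|auto]. Qed.

Lemma uniform_interpolant_trans X Y Z :
  uniform_interpolant X Y -> uniform_interpolant Y Z -> uniform_interpolant X Z.
Proof. intros [HXY HX] [HYZ HY]. split; [intros v Hv; auto|auto]. Qed.

Lemma ev_upd_transfer X B p b v :
  ent X B -> over Rt B -> ~ (pvar b X p /\ Rt b p) -> ev (upd v p b) X = true -> ev v B = true.
Proof.
  intros HXB HB Hp HX. destruct (classic (pvar b X p)) as [HXp|HXp].
  - apply (ev_upd_free B p b); auto.
  - apply HXB, (ev_upd_free X p b); auto.
Qed.

(* The guard of the [b]-branch of the Shannon expansion of [X] at [p]: the literal of
   polarity [b] if that polarity of [p] occurs in [X] and is allowed by [Rt], else [Top]. *)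
Lemma shannon_guard X p b : exists g,
  classical g = true /\ (forall v, v p = b -> ev v g = true) /\
  (forall B v, over Rt B -> ent X B -> ev v g = true -> ev (upd v p b) X = true -> ev v B = true) /\
  over (fun s q => q = p /\ s = b /\ pvar b X p /\ Rt b p) g.
Proof.
  destruct (classic (pvar b X p /\ Rt b p)) as [H|H].
  - exists (lit b p). split; [now destruct b|split; [|split]].
    + intros v. apply ev_lit.
    + intros B v _ HXB Hg HX. apply ev_lit in Hg. rewrite ev_upd_same in HX; auto.
    + intros s q Hq. apply pvar_lit in Hq as [-> ->]. tauto.
  - exists Top. split; [reflexivity|split; [reflexivity|split]].
    + intros B v HB HXB _. now apply (ev_upd_transfer X B p b v).
    + intros s q [].
Qed.

Lemma shannon_step X p : classical X = true -> exists Y,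
  classical Y = true /\ uniform_interpolant X Y /\
  over (fun s q => pvar s X q /\ (q = p -> Rt s q)) Y.
Proof.
  intros HX.
  destruct (shannon_guard X p false) as (g0 & C0 & T0 & E0 & V0).
  destruct (shannon_guard X p true) as (g1 & C1 & T1 & E1 & V1).
  exists (Or (And g0 (subst p (form_of_bool false) X)) (And g1 (subst p (form_of_bool true) X))).
  split; [|split; [split|]].
  - simpl. rewrite C0, C1, !classical_subst; auto.
  - intros v Hv. cbn [ev]. rewrite !ev_subst_bool.
    destruct (v p) eqn:E.
    + rewrite (ev_upd_same v p true X E), T1, Hv by exact E. apply orb_true_r.
    + rewrite (ev_upd_same v p false X E), T0, Hv by exact E. reflexivity.
  - intros B HB HXB v Hv. cbn [ev] in Hv. rewrite !ev_subst_bool in Hv.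
    apply orb_true_iff in Hv as [Hv|Hv]; apply andb_true_iff in Hv as [Hg Hv]; eauto.
  - intros s q Hq. cbn [pvar] in Hq.
    destruct Hq as [[Hq|Hq]|[Hq|Hq]];
      try (apply pvar_subst_bool in Hq; split; tauto);
      [apply V0 in Hq|apply V1 in Hq]; destruct Hq as (-> & -> & HX' & HR); auto.
Qed.

Lemma shannon_elim ps X : classical X = true -> exists Y,
  classical Y = true /\ uniform_interpolant X Y /\
  over (fun s q => pvar s X q /\ (In q ps -> Rt s q)) Y.
Proof.
  intros HX. induction ps as [|p ps IH].
  - exists X. split; [|split]; [auto|apply uniform_interpolant_refl|intros s q H; simpl; tauto].
  - destruct IH as (Y & CY & IXY & VY).
    destruct (shannon_step Y p CY) as (Z & CZ & IYZ & VZ).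
    exists Z. split; [|split]; [auto|eapply uniform_interpolant_trans; eauto|].
    intros s q Hq. destruct (VZ s q Hq) as [HY Hp]. destruct (VY s q HY) as [HXq Hps].
    split; auto. intros [->|Hq']; auto.
Qed.

End UniformInterpolation.

Fixpoint vars (f : form) : list nat :=
  match f with
  | Var p => [p]
  | Bot => []
  | Neg a => vars a
  | And a b | Or a b | Idis a b => vars a ++ vars b
  end.

Lemma pvar_vars f s q : pvar s f q -> In q (vars f).
Proof.
  revert s. induction f; simpl; intros s H; try tauto.
  - destruct H as [_ ->]. left. auto.
  - eauto.
  - apply in_or_app. destruct H; eauto.
  - apply in_or_app. destruct H; eauto.
  - apply in_or_app. destruct H; eauto.
Qed.

Theorem classical_uniform_interpolation Rt X : classical X = true -> exists Y,
  classical Y = true /\ uniform_interpolant Rt X Y /\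
  over (fun s q => pvar s X q /\ Rt s q) Y.
Proof.
  intros HX. destruct (shannon_elim Rt (vars X) X HX) as (Y & CY & IXY & VY).
  exists Y. split; [|split]; auto.
  intros s q Hq. destruct (VY s q Hq) as [HXq H]. eauto using pvar_vars.
Qed.

(** * Interpolants *)

Definition conjL (l : list form) : form := fold_right And Top l.
Definition disjL (l : list form) : form := fold_right Or Bot l.
Definition idisjL (l : list form) : form := fold_right Idis Bot l.

Lemma ev_conjL v l : ev v (conjL l) = true <-> sat v l.
Proof.
  induction l as [|x l IH]; simpl.
  - split; [intros _ x []|auto].
  - rewrite andb_true_iff, sat_cons, <- IH. reflexivity.
Qed.

Lemma ev_disjL v l : ev v (disjL l) = true <-> exists y, In y l /\ ev v y = true.
Proof.
  induction l as [|x l IH]; simpl.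
  - split; [discriminate|intros (y & [] & _)].
  - rewrite orb_true_iff, IH. split.
    + intros [E|(y & Hy & E)]; eauto.
    + intros (y & [<-|Hy] & E); eauto.
Qed.

Lemma classical_conjL l : all_classical l -> classical (conjL l) = true.
Proof. induction 1 as [|x l Hx _ IH]; simpl; auto. now rewrite Hx. Qed.

Lemma classical_disjL l : all_classical l -> classical (disjL l) = true.
Proof. induction 1 as [|x l Hx _ IH]; simpl; auto. now rewrite Hx. Qed.

Lemma classical_wf f : classical f = true -> wf f = true.
Proof.
  induction f; simpl; intros H; auto; try discriminate;
    apply andb_true_iff in H as [H1 H2]; rewrite IHf1, IHf2; auto.
Qed.

Lemma all_classical_wf l : all_classical l -> Forall (fun f => wf f = true) l.
Proof. apply Forall_impl, classical_wf. Qed.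

Lemma wf_idisjL l : all_classical l -> wf (idisjL l) = true.
Proof. induction 1 as [|x l Hx _ IH]; simpl; auto. now rewrite classical_wf, IH. Qed.

Lemma pvar_fold_right (op : form -> form -> form) e l s q :
  (forall a b, pvar s (op a b) q -> pvar s a q \/ pvar s b q) -> ~ pvar s e q ->
  pvar s (fold_right op e l) q -> exists x, In x l /\ pvar s x q.
Proof.
  intros Hop He. induction l as [|x l IH]; simpl; [tauto|].
  intros [H|H]%Hop; [exists x; auto|]. destruct (IH H) as (y & Hy & Hp). eauto.
Qed.

Lemma pvar_conjL l s q : pvar s (conjL l) q -> exists x, In x l /\ pvar s x q.
Proof. apply pvar_fold_right; simpl; auto. Qed.

Lemma pvar_disjL l s q : pvar s (disjL l) q -> exists x, In x l /\ pvar s x q.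
Proof. apply pvar_fold_right; simpl; auto. Qed.

Lemma pvar_idisjL l s q : pvar s (idisjL l) q -> exists x, In x l /\ pvar s x q.
Proof. apply pvar_fold_right; simpl; auto. Qed.

Lemma in_res_idisjL l r : In r (res (idisjL l)) -> r = Bot \/ exists x, In x l /\ In r (res x).
Proof.
  induction l as [|x l IH]; simpl; [intros [<-|[]]; auto|].
  intros [Hr|Hr]%in_app_or; [eauto|]. destruct (IH Hr) as [->|(y & Hy & Hr')]; eauto.
Qed.

Lemma in_res_idisjL_intro l x r : In x l -> In r (res x) -> In r (res (idisjL l)).
Proof. induction l as [|y l IH]; simpl; [tauto|]. intros [->|Hx] Hr; apply in_or_app; auto. Qed.

Fixpoint resolutions (G : list form) : list (list form) :=
  match G with
  | [] => [[]]
  | f :: G' => flat_map (fun r => map (cons r) (resolutions G')) (res f)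
  end.

Lemma in_resolutions G RG : In RG (resolutions G) <-> resolution G RG.
Proof.
  revert RG. induction G as [|f G IH]; intros RG; simpl.
  - split; [intros [<-|[]]; constructor|intros H; inversion H; auto].
  - rewrite in_flat_map. split.
    + intros (r & Hr & H). apply in_map_iff in H as (R & <- & HR). constructor; auto. now apply IH.
    + intros H. destruct (resolution_cons_inv H) as (r & R & -> & Hr & HR).
      exists r. split; auto. apply in_map_iff. exists R. split; auto. now apply IH.
Qed.

Lemma finite_choice {A B} (P : A -> B -> Prop) (l : list A) :
  (forall a, In a l -> exists b, P a b) ->
  exists l', (forall a, In a l -> exists b, In b l' /\ P a b) /\
             (forall b, In b l' -> exists a, In a l /\ P a b).
Proof.
  induction l as [|a l IH]; intros H; [exists []; split; intros ? []|].
  destruct (H a (or_introl eq_refl)) as [b Hb].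
  destruct IH as (l' & H1 & H2); [intros; apply H; right; auto|].
  exists (b :: l'). split.
  - intros x [<-|Hx]; [exists b; split; [left|]; auto|].
    destruct (H1 x Hx) as (y & Hy & Pxy). exists y. split; [right|]; auto.
  - intros y [<-|Hy]; [exists a; split; [left|]; auto|].
    destruct (H2 y Hy) as (x & Hx & Pxy). exists x. split; [right|]; auto.
Qed.

Section Interpolation.

Variables G1 G2 L1 D2 : list form.

Hypothesis WG1 : Forall (fun f => wf f = true) G1.
Hypothesis WG2 : Forall (fun f => wf f = true) G2.
Hypothesis WD2 : Forall (fun f => wf f = true) D2.
Hypothesis CL1 : all_classical L1.
Hypothesis HV : valid (G1 ++ G2) (L1 ++ D2).

Definition left_sig (s : bool) (q : nat) : Prop := pvarL s G1 q \/ pvarL (negb s) L1 q.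
Definition right_sig (s : bool) (q : nat) : Prop := pvarL (negb s) G2 q \/ pvarL s D2 q.

Definition left_formula (rho : list form) : form := And (conjL rho) (Neg (disjL L1)).

Definition interpolant_family (ths : list form) : Prop :=
  all_classical ths /\
  (forall th, In th ths -> over (fun s q => left_sig s q /\ right_sig s q) th) /\
  (forall rho, resolution G1 rho -> exists th, In th ths /\ cl_entails rho (th :: L1)) /\
  (forall th kappa, In th ths -> resolution G2 kappa ->
     exists eps, resolution D2 eps /\ cl_entails (th :: kappa) eps).

Lemma left_formula_over rho : resolution G1 rho -> over left_sig (left_formula rho).
Proof.
  intros Hrho s q [Hq|Hq].
  - apply pvar_conjL in Hq as (x & Hx & Hp). left. eapply resolution_pvar; eauto.
  - apply pvar_disjL in Hq as (x & Hx & Hp). right. exists x. auto.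
Qed.

Lemma left_formula_cover rho th : ent (left_formula rho) th -> cl_entails rho (th :: L1).
Proof.
  intros H v Hv. destruct (ev v (disjL L1)) eqn:E.
  - apply ev_disjL in E as (y & Hy & Ey). exists y. split; [right|]; auto.
  - exists th. split; [left; auto|]. apply H. simpl. rewrite E, andb_true_r. now apply ev_conjL.
Qed.

Lemma left_formula_right rho th kappa :
  resolution G1 rho -> uniform_interpolant right_sig (left_formula rho) th -> resolution G2 kappa ->
  exists eps, resolution D2 eps /\ cl_entails (th :: kappa) eps.
Proof.
  intros Hrho [_ Hth] Hkappa.
  destruct (HV (rho ++ kappa)) as (RD & HRD & He); [now apply Forall2_app|].
  apply Forall2_app_inv_l in HRD as (RL & eps & HRL & Heps & ->).
  apply resolution_classical in HRL as ->; auto.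
  exists eps. split; auto.
  (* [B] lies in the right signature and, by validity, follows from [left_formula rho]. *)
  set (B := Or (Neg (conjL kappa)) (disjL eps)).
  assert (HB : ent th B).
  { apply Hth.
    - intros s q [Hq|Hq].
      + apply pvar_conjL in Hq as (x & Hx & Hp). left. eapply resolution_pvar; eauto.
      + apply pvar_disjL in Hq as (x & Hx & Hp). right. eapply resolution_pvar; eauto.
    - intros v Hv. simpl in Hv. apply andb_true_iff in Hv as [Hr Hl].
      apply negb_true_iff in Hl. apply ev_conjL in Hr.
      simpl. destruct (ev v (conjL kappa)) eqn:Ek; [|reflexivity]. apply ev_conjL in Ek.
      destruct (He v) as (y & Hy & Ey); [now apply sat_app|].
      apply in_app_or in Hy as [Hy|Hy].
      + enough (ev v (disjL L1) = true) by congruence. apply ev_disjL. eauto.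
      + apply ev_disjL. eauto. }
  intros v Hv. apply sat_cons in Hv as [Eth Hk].
  specialize (HB v Eth). simpl in HB. apply orb_true_iff in HB as [HB|HB].
  - apply negb_true_iff in HB. apply ev_conjL in Hk. congruence.
  - now apply ev_disjL.
Qed.

Lemma interpolant_family_exists : exists ths, interpolant_family ths.
Proof.
  set (P rho th := classical th = true /\ uniform_interpolant right_sig (left_formula rho) th /\
                   over (fun s q => pvar s (left_formula rho) q /\ right_sig s q) th).
  destruct (finite_choice P (resolutions G1)) as (ths & Hcover & Hsound).
  { intros rho Hrho%in_resolutions. apply classical_uniform_interpolation.
    simpl. rewrite classical_conjL, classical_disjL; eauto using resolution_all_classical. }
  exists ths. split; [|split; [|split]].
  - apply Forall_forall. intros th Hth. now destruct (Hsound th Hth) as (rho & _ & Cth & _).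
  - intros th Hth s q Hq. destruct (Hsound th Hth) as (rho & Hrho%in_resolutions & _ & _ & Vth).
    destruct (Vth s q Hq) as [Hl Hr]. split; auto. eapply left_formula_over; eauto.
  - intros rho Hrho. destruct (Hcover rho) as (th & Hth & _ & [Hent _] & _); [now apply in_resolutions|].
    exists th. split; auto. now apply left_formula_cover.
  - intros th kappa Hth Hkappa. destruct (Hsound th Hth) as (rho & Hrho%in_resolutions & _ & Hu & _).
    eapply left_formula_right; eauto.
Qed.

Lemma idisj_interpolant ths : interpolant_family ths -> interpolant G1 G2 L1 D2 (idisjL ths).
Proof.
  intros (Cths & Vths & Hcover & Hright).
  assert (Wphi : wf (idisjL ths) = true) by now apply wf_idisjL.
  split; [exact Wphi|split; [|split]].
  - apply GT_complete; [auto|constructor; auto using all_classical_wf|].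
    intros rho Hrho. destruct (Hcover rho Hrho) as (th & Hth & He).
    exists (th :: L1). split; auto. constructor; [|now apply resolution_self].
    apply (in_res_idisjL_intro _ th); auto.
    rewrite res_classical; [left|apply (proj1 (Forall_forall _ _) Cths)]; auto.
  - apply GT_complete; auto.
    intros R HR. destruct (resolution_cons_inv HR) as (r & kappa & -> & Hr & Hkappa).
    destruct (in_res_idisjL _ _ Hr) as [->|(th & Hth & Hr')].
    + destruct (resolution_exists D2) as [eps Heps]. exists eps. split; auto.
      intros v Hv. apply sat_cons in Hv as [[=] _].
    + apply in_res_classical in Hr' as ->; [now apply Hright|].
      now apply (proj1 (Forall_forall _ _) Cths).
  - intros s q Hq. apply pvar_idisjL in Hq as (th & Hth & Hq). now apply (Vths th).
Qed.

Lemma disj_interpolant ths :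
  all_classical D2 -> interpolant_family ths -> interpolant G1 G2 L1 D2 (disjL ths).
Proof.
  intros CD2 (Cths & Vths & Hcover & Hright).
  assert (Cphi : classical (disjL ths) = true) by now apply classical_disjL.
  split; [now apply classical_wf|split; [|split]].
  - apply GT_complete; [auto|constructor; auto using classical_wf, all_classical_wf|].
    intros rho Hrho. destruct (Hcover rho Hrho) as (th & Hth & He).
    exists (disjL ths :: L1). split; [constructor; [rewrite res_classical; [left|]|apply resolution_self]; auto|].
    intros v Hv. destruct (He v Hv) as (y & [<-|Hy] & Ey).
    + exists (disjL ths). split; [left; auto|]. apply ev_disjL. eauto.
    + exists y. split; [right|]; auto.
  - apply GT_complete; [constructor; auto using classical_wf|auto|].
    intros R HR. destruct (resolution_cons_inv HR) as (r & kappa & -> & Hr & Hkappa).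
    apply (in_res_classical Cphi) in Hr as ->.
    exists D2. split; [now apply resolution_self|].
    intros v Hv. apply sat_cons in Hv as [(th & Hth & Eth)%ev_disjL Hk].
    destruct (Hright th kappa Hth Hkappa) as (eps & Heps & He).
    apply resolution_classical in Heps as ->; auto. apply He, sat_cons. auto.
  - intros s q Hq. apply pvar_disjL in Hq as (th & Hth & Hq). now apply (Vths th).
Qed.

End Interpolation.

Theorem theorem8p1 :
  forall (G D G1 G2 L1 D2 : list form),
    Forall (fun f => wf f = true) G -> Forall (fun f => wf f = true) D ->
    GT true G D ->
    Permutation G (G1 ++ G2) -> Permutation D (L1 ++ D2) ->
    all_classical L1 ->
    exists phi, interpolant G1 G2 L1 D2 phi /\
                (all_classical D2 -> classical phi = true).
Proof.
  intros G D G1 G2 L1 D2 WG WD HGT PG PD CL1.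
  assert (HV : valid (G1 ++ G2) (L1 ++ D2)) by (eapply valid_perm; eauto using GT_sound).
  apply (Permutation_Forall PG), Forall_app in WG as [WG1 WG2].
  apply (Permutation_Forall PD), Forall_app in WD as [_ WD2].
  destruct (interpolant_family_exists G1 G2 L1 D2 WG1 CL1 HV) as [ths Hths].
  destruct (classic (all_classical D2)) as [CD2|NCD2].
  - exists (disjL ths). split; [now apply disj_interpolant|].
    intros _. apply classical_disjL, Hths.
  - exists (idisjL ths). split; [now apply idisj_interpolant|tauto].
Qed.
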